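(* Let $(M,g)$ be a Riemannian manifold of dimension $n$, and let $N\ge1$ (with $2N\le n$ if $n$ is even). Then the operator-valued polynomial $$\pi_{2N}(\lambda)=\sum_{k=1}^N \mathcal{C}_{2N}^{(k)}\frac{1}{(N-k)!}\left(\lambda+\frac n2-N\right)^{N-k}$$ satisfies $$\pi_{2N}\!\left(-\frac n2+2N-j\right)=(-1)^jP_{2j}\,\pi_{2N-2j}\!\left(-\frac n2+2N-j\right),\quad j=1,\dots,N-1,$$ and $$\pi_{2N}\!\left(-\frac n2+N\right)=(-1)^{N-1}P_{2N}.$$
   Context: $P_{2N}$ denote the GJMS-operators of $(M,g)$ (conformally covariant operators $\Delta^N+$ lower order terms, $-\Delta\ge0$). A composition $I=(I_1,\dots,I_r)$ is an ordered sequence of integers $I_j\ge1$ with size $|I|=\sum I_j$; $P_{2I}=P_{2I_1}\circ\cdots\circ P_{2I_r}$. Multiplicities: $m_I^{(1)}=m_I=-(-1)^r|I|!(|I|-1)!\prod_{j=1}^r\frac{1}{I_j!(I_j-1)!}\prod_{j=1}^{r-1}\frac{1}{I_j+I_{j+1}}$ (empty products $=1$). The Stirling numbers of the first kind $s(n,k)$ are defined by $\sum_{k=0}^n s(n,k)x^k=x(x-1)\cdots(x-n+1)$. For $k\ge2$: if $a\ge1$, $J$ a non-empty composition, $a+|J|=N$ and $2\le k\le N-1$, $$m^{(k)}_{(a,J)}=\frac{\sum_{j=0}^{k-1}s(N,N-j)|J|^{k-1-j}}{(N-1)\cdots(N-k+1)}\,m^{(1)}_{(a,J)},$$ and for $2\le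 k\le N$, $m^{(k)}_{(N)}=\frac{s(N,N-k+1)}{(N-1)\cdots(N-k+1)}m^{(1)}_{(N)}$. Define $\mathcal{C}^{(k)}_{2N}=\sum_{|I|=N}m_I^{(k)}P_{2I}$ for $1\le k\le N-1$ and $\mathcal{C}^{(N)}_{2N}=(-1)^{N-1}P_{2N}$. The polynomials $\pi_{2M}$ for $M<N$ are defined by the same formula with $N$ replaced by $M$. *)

From HB Require Import structures.
From mathcomp Require Import all_boot all_order all_algebra.
Set Implicit Arguments. Unset Strict Implicit. Unset Printing Implicit Defensive.
Import Order.TTheory GRing.Theory Num.Theory.
Local Open Scope ring_scope.

(* Enumerated by choosing the first part i in 1..n and recursing on n - i
   (the fuel argument only guarantees structural termination; fuel n suffices). *)
Fixpoint comps_fuel (f n : nat) : seq (seq nat) :=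
  match f with
  | 0 => if n == 0%N then [:: [::]] else [::]
  | f'.+1 =>
      if n == 0%N then [:: [::]]
      else flatten [seq [seq i :: c | c <- comps_fuel f' (n - i)] | i <- iota 1 n]
  end.
Definition compositions (n : nat) : seq (seq nat) := comps_fuel n n.

Definition stirling1 (n k : nat) : int :=
  (\prod_(i < n) ('X - (i%:Z)%:P) : {poly int})`_k.

Section Mult.
Variable R : numFieldType.

Definition mult1 (I : seq nat) : R :=
  - (-1) ^+ size I * ((sumn I)`! * (sumn I).-1`!)%:R
  * \prod_(i <- I) ((i`! * i.-1`!)%:R)^-1
  * (match I with
     | [::] => 1
     | a :: J => \prod_(x <- pairmap addn a J) (x%:R)^-1
     end).

Definition fall (N k : nat) : R := \prod_(1 <= i < k) ((N - i)%:R).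

Definition multk (k : nat) (I : seq nat) : R :=
  if k == 1%N then mult1 I else
  match I with
  | [::] => 0
  | [:: a] => (stirling1 a (a - k + 1))%:~R / fall a k * mult1 I
  | a :: J =>
      let N := sumn I in
      (\sum_(j < k) (stirling1 N (N - j))%:~R * ((sumn J)%:R) ^+ (k.-1 - j))
        / fall N k * mult1 I
  end.
End Mult.

Section Ops.
Variables (R : numFieldType) (A : algType R) (P : nat -> A).
(* P N stands for the GJMS operator P_{2N}; P_{2I} = P_{2I_1} o ... o P_{2I_r} *)
Definition PI (I : seq nat) : A := \prod_(i <- I) P i.

Definition Cop (k N : nat) : A :=
  if k == N then (-1) ^+ N.-1 *: P N
  else \sum_(I <- compositions N) multk R k I *: PI I.

Definition pi_op (n N : nat) (lam : R) : A :=
  \sum_(1 <= k < N.+1)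
    (((N - k)`!)%:R^-1 * (lam + n%:R / 2 - N%:R) ^+ (N - k)) *: Cop k N.
End Ops.

From HB Require Import structures.
From mathcomp Require Import all_boot all_order all_algebra.
From mathcomp Require Import zify ring.
Import Order.TTheory GRing.Theory Num.Theory.
Local Open Scope ring_scope.

(* Grouping pi_2N(lam) by compositions, the coefficient of P_2I is a polynomial
   in x = lam + n/2 - N.  For I = (a, J), the Stirling-number formula for
   m^(k)_I makes it m_I / (N-1)! times the falling factorial
   x (x-1) ... (x-N+1) with the factor x - |J| deleted; the term C^(N) is
   exactly the constant coefficient of that product.  At lam = -n/2 + 2N - j,
   i.e. x = N - j, the coefficient therefore vanishes unless |J| = N - j, that
   is a = j; then the surviving product of integers, together with the ratio
   m_(j,J) / m_J, gives (-1)^j times the coefficient of P_2J in pi_(2N-2j),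
   which is evaluated at x' = N.  At lam = -n/2 + N, i.e. x = 0, only the
   constant term (-1)^(N-1) P_2N survives. *)

Lemma comps_fuel_enough f1 f2 n : (n <= f1)%N -> (n <= f2)%N ->
  comps_fuel f1 n = comps_fuel f2 n.
Proof.
elim: f1 f2 n => [|f1 IH] [|f2] n /=.
- by [].
- by rewrite leqn0 => /eqP ->.
- by rewrite leqn0 => _ /eqP ->.
case: eqP => // /eqP n0 h1 h2; congr flatten; apply/eq_in_map => i.
by rewrite mem_iota => /andP [i1 i2]; rewrite (IH f2) //; lia.
Qed.

Lemma compositionsS n : (0 < n)%N -> compositions n =
  flatten [seq [seq i :: c | c <- compositions (n - i)] | i <- iota 1 n].
Proof.
case: n => // n _.
have -> : compositions n.+1 =
  flatten [seq [seq i :: c | c <- comps_fuel n (n.+1 - i)] | i <- iota 1 n.+1] by [].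
congr flatten; apply/eq_in_map => i; rewrite mem_iota => /andP [i1 i2].
by rewrite /compositions (@comps_fuel_enough n (n.+1 - i)) //; lia.
Qed.

Lemma mem_comps_fuel f n c :
  c \in comps_fuel f n -> sumn c = n /\ all (fun i => 0 < i)%N c.
Proof.
elim: f n c => [|f IH] n c /=.
  by case: eqP => // ->; rewrite inE => /eqP ->.
case: eqP => [-> | _]; first by rewrite inE => /eqP ->.
case/flattenP => s /mapP [i]; rewrite mem_iota => /andP [i1 i2] ->.
by case/mapP => c' /IH [h1 h2] -> /=; rewrite h2 andbT; split; [lia|].
Qed.

Lemma mem_compositions n c :
  c \in compositions n -> sumn c = n /\ all (fun i => 0 < i)%N c.
Proof. exact: mem_comps_fuel. Qed.

Lemma big_compositions (V : nmodType) N (F : seq nat -> V) : (0 < N)%N ->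
  \sum_(I <- compositions N) F I
  = \sum_(i <- iota 1 N) \sum_(J <- compositions (N - i)) F (i :: J).
Proof.
move=> N_gt0; rewrite compositionsS // big_flatten /= big_map.
by apply: eq_bigr => i _; rewrite big_map.
Qed.

Lemma big_compositions_singleton (R : pzRingType) (V : lmodType R) N
    (F : seq nat -> V) (s : R) : (0 < N)%N ->
  \sum_(I <- compositions N) (if I == [:: N] then s else 0) *: F I = s *: F [:: N].
Proof.
move=> N_gt0; rewrite big_compositions //.
have -> : iota 1 N = iota 1 N.-1 ++ [:: N].
  by rewrite -{1}(prednK N_gt0) -(addn1 N.-1) iotaD add1n prednK.
rewrite big_cat /= big_seq1 subnn.
have -> : compositions 0 = [:: [::]] by [].
rewrite big_seq1 eqxx big1_seq ?add0r //.
move=> i /andP [_]; rewrite mem_iota => /andP [i_gt0 i_lt].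
apply: big1_seq => c /andP [_ /mem_compositions [sum_c _]].
by case: eqP => [[_ c0]|]; [move: sum_c; rewrite c0 /=; lia | rewrite scale0r].
Qed.

Lemma horner_stirling1 (S : comNzRingType) N (x : S) :
  \sum_(i < N.+1) (stirling1 N i)%:~R * x ^+ i = \prod_(i < N) (x - i%:R).
Proof.
set p := \prod_(i < N) ('X - (i%:Z)%:P) : {poly int}.
have map_p : map_poly intr p = \prod_(i < N) ('X - ((i%:Z)%:~R)%:P) :> {poly S}.
  exact: map_prod_XsubC.
have size_p : (size (map_poly intr p : {poly S}) <= N.+1)%N.
  by rewrite map_p -big_enum size_prod_XsubC size_enum_ord.
rewrite (eq_bigr (fun i : 'I_N.+1 => (map_poly intr p)`_i * x ^+ i)); last first.
  by move=> i _; rewrite coef_map.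
by rewrite -horner_coef_wide // map_p horner_prod; apply: eq_bigr => i _; rewrite hornerXsubC.
Qed.

Lemma stirling1_diag N : stirling1 N N = 1.
Proof.
have monic_p : \prod_(i < N) ('X - (i%:Z)%:P) \is monic by apply: monic_prod_XsubC.
have size_p : size (\prod_(i < N) ('X - (i%:Z)%:P)) = N.+1.
  by rewrite -big_enum size_prod_XsubC size_enum_ord.
by move/monicP: monic_p; rewrite lead_coefE size_p.
Qed.

(* The coefficients [c_k = \sum_(j < k) d_j B^(k-1-j)] are those produced by
   dividing [\sum_j d_j y^(N-j)] by [y - B] with Horner's scheme. *)
Lemma synthetic_division (S : comPzRingType) N (d : nat -> S) (y B : S) :
  (y - B) * \sum_(1 <= k < N.+1) (\sum_(j < k) d j * B ^+ (k.-1 - j)) * y ^+ (N - k)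
  = \sum_(j < N) d j * (y ^+ (N - j) - B ^+ (N - j)).
Proof.
elim: N => [|N IH]; first by rewrite big_geq // big_ord0 mulr0.
rewrite big_nat_recr //= subnn expr0 mulr1.
have -> : \sum_(1 <= k < N.+1) (\sum_(j < k) d j * B ^+ (k.-1 - j)) * y ^+ (N.+1 - k)
   = (\sum_(1 <= k < N.+1) (\sum_(j < k) d j * B ^+ (k.-1 - j)) * y ^+ (N - k)) * y.
  rewrite mulr_suml; apply: eq_big_nat => k /andP [k1 k2].
  by rewrite subSn // exprSr mulrA.
rewrite mulrDr mulrA IH [in LHS]big_ord_recr [in RHS]big_ord_recr /=.
rewrite subnn subSnn expr0 expr1 mulr1 mulrDr addrA; congr (_ + _); last by rewrite mulrC.
rewrite mulr_suml mulr_sumr -big_split /=; apply: eq_bigr => j _.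
by rewrite subSn; [rewrite !exprS; ring | exact: ltnW].
Qed.

(* [\sum_k ffact_quot_coef N b k * X^(N-k)] is the quotient of the falling
   factorial [X (X-1) ... (X-N+1) = \sum_i stirling1 N i * X^i] by [X - b]. *)
Definition ffact_quot_coef (R : pzRingType) (N b k : nat) : R :=
  \sum_(j < k) (stirling1 N (N - j))%:~R * b%:R ^+ (k.-1 - j).

Lemma ffact_quot_coefE (R : idomainType) N b (x : R) : (b < N)%N ->
  \sum_(1 <= k < N.+1) ffact_quot_coef R N b k * x ^+ (N - k)
  = \prod_(i < N | (i : nat) != b) (x - i%:R).
Proof.
move=> b_lt_N.
pose T : {poly R} := \sum_(1 <= k < N.+1) ffact_quot_coef {poly R} N b k * 'X ^+ (N - k).
have T_x : T.[x] = \sum_(1 <= k < N.+1) ffact_quot_coef R N b k * x ^+ (N - k).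
  rewrite horner_sum; apply: eq_bigr => k _.
  rewrite hornerM horner_exp hornerX horner_sum; congr (_ * _); apply: eq_bigr => j _.
  by rewrite hornerM horner_int horner_exp -polyC_natr hornerC.
have falling (z : {poly R}) : \sum_(j < N) (stirling1 N (N - j))%:~R * z ^+ (N - j)
    = \prod_(i < N) (z - i%:R) - (stirling1 N 0)%:~R.
  rewrite -horner_stirling1 [X in _ = X - _](reindex_inj rev_ord_inj).
  rewrite [X in _ = X - _]big_ord_recr /= subnn expr0 mulr1 addrK.
  by apply: eq_bigr => j _; rewrite subSS.
have XbT : ('X - b%:R%:P) * T = \prod_(i < N) ('X - i%:R%:P).
  rewrite polyC_natr /T /ffact_quot_coef.
  rewrite (@synthetic_division _ N (fun j => (stirling1 N (N - j))%:~R)).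
  under eq_bigr do rewrite mulrBr.
  rewrite sumrB !falling [X in _ - (X - _)](bigD1 (Ordinal b_lt_N)) //=.
  rewrite subrr mul0r sub0r opprK addrNK.
  by apply: eq_bigr => i _; rewrite polyC_natr.
have T_eq : T = \prod_(i < N | (i : nat) != b) ('X - i%:R%:P).
  apply: (mulfI (negbT (polyXsubC_eq0 (b%:R : R)))).
  by rewrite XbT (bigD1 (Ordinal b_lt_N)).
by rewrite -T_x T_eq horner_prod; apply: eq_bigr => i _; rewrite hornerXsubC.
Qed.

Lemma ffact_quot_coef_top (R : idomainType) N b : (b < N)%N ->
  ffact_quot_coef R N b N = \prod_(i < N | (i : nat) != b) (- i%:R).
Proof.
move=> b_lt_N; have N_gt0 : (0 < N)%N by lia.
under [RHS]eq_bigr do rewrite -sub0r.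
rewrite -(@ffact_quot_coefE R N b 0 b_lt_N) big_nat_recr //= subnn expr0 mulr1.
rewrite big1_seq ?add0r // => k; rewrite mem_index_iota => /andP [_ k_lt].
by rewrite expr0n (_ : (N - k == 0)%N = false) ?mulr0 //; lia.
Qed.

Lemma natr_ffact (R : pzRingType) n m : (m <= n)%N ->
  (n ^_ m)%:R = \prod_(i < m) (n%:R - i%:R : R).
Proof.
move=> m_le_n; rewrite ffact_prod natr_prod; apply: eq_bigr => i _.
by rewrite natrB //; apply: ltnW (leq_trans (ltn_ord i) m_le_n).
Qed.

Lemma prod_skip_sub_self (R : comPzRingType) M d :
  \prod_(i < M + d.+1 | (i : nat) != M) (M%:R - i%:R : R) = (-1) ^+ d * (M`! * d`!)%:R.
Proof.
elim: d => [|d IH].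
  rewrite big_mkcond addn1 big_ord_recr /= eqxx mulr1 expr0 mul1r muln1.
  rewrite -ffactnn natr_ffact //; apply: eq_bigr => i _.
  by rewrite ltn_eqF.
rewrite big_mkcond addnS big_ord_recr /= -big_mkcond IH.
have -> : (M + d.+1 != M) by lia.
by rewrite natrD factS !natrM exprS; ring.
Qed.

Lemma prod_skip_sub (R : comPzRingType) N M s : (s < M)%N -> (M <= N)%N ->
  (N - s)%:R * \prod_(i < M | (i : nat) != s) (N%:R - i%:R : R) * (N - M)`!%:R = N`!%:R.
Proof.
move=> s_lt_M M_le_N; rewrite natrB; last by lia.
by rewrite -(ffact_fact M_le_N) natrM natr_ffact // [in RHS](bigD1 (Ordinal s_lt_M)).
Qed.

Section Multiplicities.
Variable R : numFieldType.

Lemma natr_fact_neq0 n : n`!%:R != 0 :> R.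
Proof. by rewrite pnatr_eq0 -lt0n fact_gt0. Qed.

Lemma fact_mul_fall N k : (1 <= k <= N)%N ->
  (N - k)`!%:R * fall R N k = N.-1`!%:R.
Proof.
move=> /andP [k_gt0 k_le_N].
have -> : fall R N k = ((N.-1) ^_ k.-1)%:R.
  rewrite /fall -natr_prod ffact_prod -{1}(prednK k_gt0) big_add1 /= big_mkord.
  by congr _%:R; apply: eq_bigr => i _; lia.
rewrite -natrM mulnC -(@ffact_fact N.-1 k.-1); last by lia.
by congr (_ * _`!)%N%:R; lia.
Qed.

Lemma mult1_singleton a : mult1 R [:: a] = 1.
Proof.
rewrite /mult1 big_seq1 big_nil mulr1 /= addn0 expr1 opprK mul1r.
by apply: divff; rewrite natrM mulf_neq0 // natr_fact_neq0.
Qed.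

Lemma mult1_cons2 a b J :
  mult1 R [:: a, b & J]
  = - ((a + sumn (b :: J))`! * (a + sumn (b :: J)).-1`!)%:R
      / ((a`! * a.-1`!)%:R * ((sumn (b :: J))`! * (sumn (b :: J)).-1`!)%:R)
      * (a + b)%:R^-1 * mult1 R (b :: J).
Proof.
rewrite /mult1 /= !big_cons exprS.
move: (\prod_(_ <- J) _) (\prod_(_ <- pairmap _ _ _) _) ((-1) ^+ _) (a + b)%:R^-1.
by move=> U V sg c; rewrite !natrM; field; rewrite !natr_fact_neq0.
Qed.

Lemma multk_cons k a J : (1 <= k <= a + sumn J)%N ->
  multk R k (a :: J)
  = ffact_quot_coef R (a + sumn J) (sumn J) k / fall R (a + sumn J) k * mult1 R (a :: J).
Proof.
case/andP => k_gt0 k_le; rewrite /multk /ffact_quot_coef.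
have [-> | k_neq1] := eqVneq k 1%N.
  by rewrite big_ord1 subn0 stirling1_diag /fall big_geq // divr1 mul1r expr0 mul1r.
case: J k_le => [|b J] k_le //=.
case: k k_gt0 k_le k_neq1 => [//|k] _ k_le k_neq1.
rewrite big_ord_recr /= subnn expr0 mulr1 big1 ?add0r => [|i _].
  by rewrite !addn0 (_ : (a - k.+1 + 1 = a - k)%N) //; move: k_le; rewrite /= addn0; lia.
by rewrite mulr0n expr0n (_ : (k - i == 0)%N = false) ?mulr0 //; have := ltn_ord i; lia.
Qed.

Lemma mult1_ffact_quot_coef_top a J : (0 < a)%N -> all (fun i => 0 < i)%N J ->
  mult1 R (a :: J) / (a + sumn J).-1`!%:R
    * ffact_quot_coef R (a + sumn J) (sumn J) (a + sumn J)
  = if a :: J == [:: (a + sumn J)%N] then (-1) ^+ (a + sumn J).-1 else 0.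
Proof.
move=> a_gt0 J_pos; rewrite ffact_quot_coef_top; last by lia.
case: J J_pos => [|b J] /= J_pos.
  rewrite addn0 eqxx mult1_singleton mul1r; case: a a_gt0 => // d _.
  have := prod_skip_sub_self R 0 d; rewrite add0n mul1n /=.
  under eq_bigr do rewrite sub0r.
  by move=> ->; field; rewrite natr_fact_neq0.
have N_gt0 : (0 < a + (b + sumn J))%N by lia.
rewrite (bigD1 (Ordinal N_gt0)) /=; last by case/andP: J_pos; lia.
by rewrite oppr0 mul0r mulr0; case: eqP => // -[].
Qed.

Definition pi_coef N (x : R) (I : seq nat) : R :=
  \sum_(1 <= k < N) ((N - k)`!%:R^-1 * x ^+ (N - k)) * multk R k I
  + (if I == [:: N] then (-1) ^+ N.-1 else 0).

Lemma pi_coef_cons a J x : (0 < a)%N -> all (fun i => 0 < i)%N J ->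
  pi_coef (a + sumn J) x (a :: J)
  = mult1 R (a :: J) / (a + sumn J).-1`!%:R
      * \prod_(i < a + sumn J | (i : nat) != sumn J) (x - i%:R).
Proof.
move=> a_gt0 J_pos; have b_lt_N : (sumn J < a + sumn J)%N by lia.
rewrite -(@ffact_quot_coefE R _ _ x b_lt_N) mulr_sumr big_nat_recr /=; last by lia.
rewrite subnn expr0 mulr1 /pi_coef -mult1_ffact_quot_coef_top //.
congr (_ + _); apply: eq_big_nat => k /andP [k_gt0 k_lt].
rewrite multk_cons; last by rewrite k_gt0 ltnW.
have fall_eq : (a + sumn J - k)`!%:R * fall R (a + sumn J) k = (a + sumn J).-1`!%:R.
  by apply: fact_mul_fall; rewrite k_gt0 ltnW.
have := natr_fact_neq0 (a + sumn J).-1.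
rewrite -fall_eq mulf_eq0 negb_or => /andP [fact_neq0 fall_neq0].
by field; rewrite fact_neq0 fall_neq0.
Qed.

Lemma pi_coef_cons_root a J m : (0 < a)%N -> all (fun i => 0 < i)%N J ->
  (m < a + sumn J)%N -> m != sumn J -> pi_coef (a + sumn J) m%:R (a :: J) = 0.
Proof.
move=> a_gt0 J_pos m_lt m_neq.
by rewrite pi_coef_cons // (bigD1 (Ordinal m_lt)) //= subrr mul0r mulr0.
Qed.

Lemma pi_coef_cons_tail j b J : (0 < j)%N -> (0 < b)%N -> all (fun i => 0 < i)%N J ->
  pi_coef (j + sumn (b :: J)) (sumn (b :: J))%:R [:: j, b & J]
  = (-1) ^+ j * pi_coef (sumn (b :: J)) (j + sumn (b :: J))%:R (b :: J).
Proof.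
case: j => // d _ b_gt0 J_pos.
have bJ_pos : all (fun i => 0 < i)%N (b :: J) by rewrite /= b_gt0.
rewrite pi_coef_cons // pi_coef_cons // mult1_cons2 [sumn (b :: J)]/= succnK.
have -> : \prod_(i < d.+1 + (b + sumn J) | (i : nat) != (b + sumn J)%N)
    ((b + sumn J)%:R - i%:R) = (-1) ^+ d * ((b + sumn J)`! * d`!)%:R :> R.
  by rewrite addnC prod_skip_sub_self.
have s_lt : (sumn J < b + sumn J)%N by lia.
have := @prod_skip_sub R (d.+1 + (b + sumn J)) _ _ s_lt (leq_addl _ _).
rewrite addnK (_ : _ - sumn J = d.+1 + b)%N; last by lia.
rewrite !natrM => <-; move: (\prod_(_ < _ | _) _) (mult1 R _) => Q m.
have := natr_fact_neq0 d; have : (d.+1 + b)%:R != 0 :> R by rewrite pnatr_eq0.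
have d1_neq0 : 1 + d%:R != 0 :> R by rewrite addrC natr1 pnatr_eq0.
move: d`!%:R (d.+1 + b)%:R => F c c_neq0 F_neq0.
by rewrite exprS; field; rewrite c_neq0 F_neq0 d1_neq0 !natr_fact_neq0.
Qed.
End Multiplicities.

Section PiPolynomial.
Variables (R : numFieldType) (A : algType R) (P : nat -> A).

Lemma pi_opE n N (lam : R) : (0 < N)%N ->
  pi_op P n N lam
  = \sum_(I <- compositions N) pi_coef R N (lam + n%:R / 2 - N%:R) I *: PI P I.
Proof.
move=> N_gt0; rewrite /pi_op big_nat_recr //= subnn expr0 mulr1 invr1 scale1r /Cop eqxx.
under [in RHS]eq_bigr do rewrite /pi_coef scalerDl.
rewrite big_split /= big_compositions_singleton // /PI big_seq1; congr (_ + _).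
under [in RHS]eq_bigr do rewrite scaler_suml.
rewrite exchange_big /=; apply: eq_big_nat => k /andP [k_gt0 k_lt].
rewrite ifF; last by apply/eqP; lia.
by rewrite scaler_sumr; apply: eq_bigr => I _; rewrite scalerA.
Qed.

Lemma pi_op_top n N : (0 < N)%N ->
  pi_op P n N (- (n%:R / 2) + N%:R) = (-1) ^+ N.-1 *: P N.
Proof.
move=> N_gt0; rewrite /pi_op (_ : - (n%:R / 2) + N%:R + n%:R / 2 - N%:R = 0); last by ring.
rewrite big_nat_recr //= subnn expr0 mulr1 invr1 scale1r /Cop eqxx big1_seq ?add0r // => k.
rewrite mem_index_iota => /andP [_ k_lt].
by rewrite expr0n (_ : (N - k == 0)%N = false) ?mulr0 ?scale0r //; lia.
Qed.

Lemma pi_op_factor n N j : (0 < j < N)%N ->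
  pi_op P n N (- (n%:R / 2) + (2 * N - j)%:R)
  = (-1) ^+ j *: (P j * pi_op P n (N - j) (- (n%:R / 2) + (2 * N - j)%:R)).
Proof.
move=> /andP [j_gt0 j_lt_N]; have M_gt0 : (0 < N - j)%N by lia.
have shift (K L : nat) : (2 * N - j = K + L)%N ->
    - (n%:R / 2) + (2 * N - j)%:R + n%:R / 2 - L%:R = K%:R :> R.
  by move=> ->; rewrite natrD; ring.
rewrite !pi_opE //; last lia.
rewrite (shift (N - j)%N N) ?(shift N (N - j)%N); try lia.
rewrite big_compositions; last by lia.
rewrite (bigD1_seq j) /=; last exact: iota_uniq; last by rewrite mem_iota; lia.
rewrite [X in _ + X]big1_seq ?addr0 => [|i /andP [i_neq_j]]; last first.
  rewrite mem_iota => /andP [i_gt0 i_le].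
  apply: big1_seq => J /andP [_ /mem_compositions [sum_J J_pos]].
  have i_sumJ : (i + sumn J)%N = N by lia.
  by rewrite -{1}i_sumJ pi_coef_cons_root ?scale0r //; lia.
rewrite mulr_sumr scaler_sumr; apply: eq_big_seq => J /mem_compositions [sum_J J_pos].
rewrite /PI big_cons -scalerAr scalerA; congr (_ *: _).
case: J sum_J J_pos => [|b J] sum_J; first by move: M_gt0; rewrite -sum_J.
case/andP => b_gt0 J_pos; have := @pi_coef_cons_tail R _ _ _ j_gt0 b_gt0 J_pos.
by rewrite sum_J subnKC // ltnW.
Qed.
End PiPolynomial.

(* The parity condition on n only guarantees that the GJMS operators exist; the
   identities themselves hold for any family [P]. *)
Theorem theorem2p2 (R : numFieldType) (A : algType R) (P : nat -> A) (n N : nat) :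
  (1 <= N)%N -> (~~ odd n -> (2 * N <= n)%N) ->
  (forall j : nat, (1 <= j <= N.-1)%N ->
     pi_op P n N (- (n%:R / 2) + (2 * N - j)%:R)
     = (-1) ^+ j *: (P j * pi_op P n (N - j) (- (n%:R / 2) + (2 * N - j)%:R)))
  /\ pi_op P n N (- (n%:R / 2) + N%:R) = (-1) ^+ N.-1 *: P N.
Proof.
move=> N_gt0 _; split; last exact: pi_op_top.
by move=> j /andP [j_gt0 j_le]; apply: pi_op_factor; rewrite j_gt0; lia.
Qed.
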